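(* Let $R$ be a commutative ring and let $(A,d)$ be an acyclic differential graded $R$-algebra. Let $\bar I\subseteq\bar J$ be graded ideals of the graded algebra $\ker(d)$. If $\bar I\neq\bar J$, then $A\cdot\bar I\neq A\cdot\bar J$.
   Context: A differential graded (dg) $R$-algebra $(A,d)$ is a $\mathbb{Z}$-graded $R$-algebra $A$ with an $R$-linear endomorphism $d$, homogeneous of degree $1$, with $d^2=0$ and $d(ab)=d(a)b+(-1)^{|a|}a\,d(b)$ for homogeneous $a,b$. It is acyclic if its homology vanishes, i.e. $\ker(d)=\operatorname{im}(d)$. The set $\ker(d)$ is a graded subalgebra of $A$; $A\cdot\bar I$ denotes the left ideal of $A$ generated by $\bar I$. *)

From HB Require Import structures.
From mathcomp Require Import all_boot all_order all_algebra.
Set Implicit Arguments. Unset Strict Implicit. Unset Printing Implicit Defensive.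
Import GRing.Theory Num.Theory.
Local Open Scope ring_scope.

Section DG.
Variables (R : comNzRingType) (A : algType R).

(* A Z-grading of A: G n is the set of homogeneous elements of degree n.
   Each G n is an R-submodule, 1 has degree 0, G m * G n <= G (m+n),
   and A is the internal direct sum of the G n. *)
Definition is_grading (G : int -> A -> Prop) : Prop :=
  [/\ (forall n, G n 0),
      (forall n (r : R) x y, G n x -> G n y -> G n (r *: x + y)) /\ G 0 1,
      (forall m n x y, G m x -> G n y -> G (m + n) (x * y)),
      (forall x, exists (s : seq int) (f : int -> A),
          [/\ uniq s, (forall n, G n (f n)) & x = \sum_(n <- s) f n])
    & (forall (s : seq int) (f : int -> A), uniq s -> (forall n, G n (f n)) ->
          \sum_(n <- s) f n = 0 -> forall n, n \in s -> f n = 0)].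

Definition is_dga (G : int -> A -> Prop) (d : {linear A -> A}) : Prop :=
  [/\ is_grading G,
      (forall n x, G n x -> G (n + 1) (d x)),
      (forall x, d (d x) = 0)
    & (forall n a b, G n a -> d (a * b) = d a * b + (-1) ^+ `|n|%N * (a * d b))].

Definition acyclic (d : A -> A) : Prop :=
  forall x, d x = 0 -> exists y, x = d y.

Definition graded_ideal_of_ker (G : int -> A -> Prop) (d : A -> A)
    (I : A -> Prop) : Prop :=
  [/\ (forall x, I x -> d x = 0),
      I 0,
      (forall x y, I x -> I y -> I (x - y)),
      (forall a x, d a = 0 -> I x -> I (a * x) /\ I (x * a))
    & (forall x (s : seq int) (f : int -> A), I x -> uniq s ->
         (forall n, G n (f n)) -> x = \sum_(n <- s) f n ->
         forall n, n \in s -> I (f n))].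

Definition left_ideal_gen (I : A -> Prop) : A -> Prop :=
  fun y => exists (k : nat) (a x : 'I_k -> A),
    (forall i, I (x i)) /\ y = \sum_(i < k) a i * x i.

End DG.

From HB Require Import structures.
From mathcomp Require Import all_boot all_order all_algebra.
Set Implicit Arguments. Unset Strict Implicit. Unset Printing Implicit Defensive.
Import GRing.Theory.
Local Open Scope ring_scope.

(* Acyclicity gives h with d h = 1, so every cycle x equals d (h x).  If x = \sum a_i y_i
   with the y_i in a graded ideal I of ker d, the Leibniz rule gives
   x = \sum d (h a_i) y_i, and each d (h a_i) is a cycle, so x lies in I.
   Hence I is recovered from A . I as its set of cycles. *)

Section DGA.
Variables (R : comNzRingType) (A : algType R).
Variables (G : int -> A -> Prop) (d : {linear A -> A}).
Hypothesis dgaA : is_dga G d.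

Lemma dga_d1 : d 1 = 0.
Proof.
case: dgaA => [[_ [_ G01] _ _ _] _ _ leibniz].
have := leibniz 0 1 1 G01; rewrite !mulr1 expr0 !mul1r => d1D.
by apply: (@addrI _ (d 1)); rewrite addr0 -d1D.
Qed.

Lemma dga_dM_cycle (a y : A) : d y = 0 -> d (a * y) = d a * y.
Proof.
move=> dy0; case: dgaA => [[_ _ _ decomp _] _ _ leibniz].
have [s [f [_ Gf ->]]] := decomp a.
rewrite mulr_suml !raddf_sum mulr_suml; apply: eq_bigr => n _ /=.
by rewrite (leibniz n) // dy0 !mulr0 addr0.
Qed.

Hypothesis acyclic_d : acyclic d.

Lemma acyclic_cycle_boundary : exists h, forall x, d x = 0 -> x = d (h * x).
Proof.
have [h d_h] := acyclic_d dga_d1.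
by exists h => x dx0; rewrite dga_dM_cycle // -d_h mul1r.
Qed.

Lemma graded_ideal_of_kerD (I : A -> Prop) :
  graded_ideal_of_ker G d I -> forall x y, I x -> I y -> I (x + y).
Proof.
case=> _ I0 Isub _ _ x y Ix Iy.
by have := Isub x (0 - y) Ix (Isub 0 y I0 Iy); rewrite sub0r opprK.
Qed.

Lemma left_ideal_gen_cycle (I : A -> Prop) (x : A) :
  graded_ideal_of_ker G d I -> left_ideal_gen I x -> d x = 0 -> I x.
Proof.
move=> gI [k [a [y [Iy ->]]]] dx0.
have [h h_bd] := acyclic_cycle_boundary.
rewrite (h_bd _ dx0) mulr_sumr raddf_sum.
case: (gI) => I_cycle I0 _ Imul _.
apply: (big_ind I) => [//|u v|i _]; first exact: graded_ideal_of_kerD.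
rewrite /= mulrA dga_dM_cycle; last exact: I_cycle.
by apply: (Imul _ _ _ (Iy i)).1; case: dgaA.
Qed.

End DGA.

Lemma sub_left_ideal_gen (R : comNzRingType) (A : algType R) (I : A -> Prop) (x : A) :
  I x -> left_ideal_gen I x.
Proof.
by move=> Ix; exists 1%N, (fun _ => 1), (fun _ => x); rewrite big_ord1 mul1r.
Qed.

Theorem lemma2p6 (R : comNzRingType) (A : algType R)
  (G : int -> A -> Prop) (d : {linear A -> A})
  (Hdga : is_dga G d) (Hacyc : acyclic d)
  (I J : A -> Prop)
  (HI : graded_ideal_of_ker G d I) (HJ : graded_ideal_of_ker G d J)
  (HIJ : forall x, I x -> J x)
  (HneqIJ : ~ (forall x, I x <-> J x)) :
  ~ (forall y, left_ideal_gen I y <-> left_ideal_gen J y).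
Proof.
move=> AI_eq_AJ; apply: HneqIJ => x; split; first exact: HIJ.
move=> Jx; have [J_cycle _ _ _ _] := HJ.
apply: (left_ideal_gen_cycle Hdga Hacyc HI _ (J_cycle x Jx)).
by apply/AI_eq_AJ; apply: sub_left_ideal_gen.
Qed.
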